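(* Let $\rho:\,]0,+\infty[\,\to\,]0,+\infty[$ be a continuous function (the equation of state $\rho=\rho(P)$, so that $\rho(P)>0$ for $P>0$). Let $R>0$ and $M>0$ satisfy $1-\frac{2M}{R}>0$. Suppose $(m,P)$ is a $C^1$ solution on $]0,R[$ of the Tolman–Oppenheimer–Volkoff system $$\frac{dm}{dr}=4\pi r^2\rho,\qquad \frac{dP}{dr}=-(\rho+P)\,\frac{m+4\pi r^3\rho}{r^2\left(1-\frac{2m}{r}\right)},\qquad \rho=\rho(P(r)),$$ such that for every $r\in\,]0,R[$ the point $(r,m(r),P(r))$ lies in the domain $$\mathsf{D}=\Big\{\,0<r,\ 0<P,\ 0<m+4\pi r^3\rho(P),\ 0<1-\tfrac{2m}{r}\,\Big\},$$ and such that $m(r)\to M$ and $P(r)\to 0$ as $r\to R-0$. Assume moreover that $P(r)$ converges to a finite limit $P_{\mathsf{O}}<\infty$ as $r\to +0$. Then $m(r)\to 0$ as $r\to+0$, and $$m(r)=\int_0^r 4\pi\rho(P(r'))\,(r')^2\,dr'\qquad\text{for all } 0<r<R.$$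
   Context: Geometrical units are used, i.e. the gravitational constant and the speed of light are set equal to $1$. The system is the static spherically symmetric Einstein–Euler (Tolman–Oppenheimer–Volkoff) system for a perfect fluid with pressure $P$, density $\rho=\rho(P)$ and mass function $m(r)$; the data $(m,P)=(M,0)$ at $r=R$ correspond to matching with the exterior Schwarzschild metric of mass $M$ on the sphere $r=R$. *)

From Stdlib Require Import Reals.
From Coquelicot Require Export Coquelicot.
Export Reals.
Open Scope R_scope.

Definition tov_dP (rho : R -> R) (r m p : R) : R :=
  - (rho p + p) * (m + 4 * PI * r ^ 3 * rho p) / (r ^ 2 * (1 - 2 * m / r)).

Definition in_domain_D (rho : R -> R) (r m p : R) : Prop :=
  0 < r /\ 0 < p /\ 0 < m + 4 * PI * r ^ 3 * rho p /\ 0 < 1 - 2 * m / r.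

(** Along the solution [dP/dr < 0], so [P] decreases and its limit [P_O] at the
    centre dominates [P(R/2) > 0]; as [rho] is continuous on [P > 0], this gives
    [rho(P(r)) -> rho(P_O)].
    The domain conditions squeeze the mass:
    [-4 pi r^3 rho(P(r)) < m(r) < r/2], so [m(r) -> 0].  The integral formula is
    then the fundamental theorem of calculus on [[a, r]] with [a -> 0+]. *)

From Stdlib Require Import Reals Lra.
From Coquelicot Require Import Coquelicot.
Open Scope R_scope.

Lemma is_derive_neg_decreasing (f df : R -> R) (a b : Rbar) :
  (forall x : R, Rbar_lt a x -> Rbar_lt x b -> is_derive f x (df x)) ->
  (forall x : R, Rbar_lt a x -> Rbar_lt x b -> df x < 0) ->
  forall x y : R, Rbar_lt a x -> x < y -> Rbar_lt y b -> f y < f x.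
Proof.
  intros Hder Hneg x y Hax Hxy Hyb.
  enough (- f x < - f y) by lra.
  apply (incr_function (fun z => - f z) a b (fun z => - df z)); auto.
  - intros z Haz Hzb. exact (is_derive_opp f z (df z) (Hder z Haz Hzb)).
  - intros z Haz Hzb. specialize (Hneg z Haz Hzb). lra.
Qed.

Lemma at_right_between (a b : R) : a < b -> at_right a (fun x => a < x < b).
Proof.
  intros Hab.
  exists (mkposreal (b - a) ltac:(lra)); intros x Hx Hax; split; [exact Hax |].
  change (Rabs (x - a) < b - a) in Hx; apply Rabs_def2 in Hx; lra.
Qed.

Lemma filterlim_at_right_continuous (f : R -> R) (a : R) :
  continuous f a -> filterlim f (at_right a) (locally (f a)).
Proof.
  apply filterlim_filter_le_1.
  intros Q [eps HQ]; exists eps; intros y Hy _; now apply HQ.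
Qed.

Lemma filterlim_Rmult {T : Type} {F : (T -> Prop) -> Prop} {FF : Filter F}
  (f g : T -> R) (a b : R) :
  filterlim f F (locally a) -> filterlim g F (locally b) ->
  filterlim (fun x => f x * g x) F (locally (a * b)).
Proof. intros Hf Hg. exact (filterlim_comp_2 f g Rmult Hf Hg (filterlim_mult a b)). Qed.

Lemma decreasing_le_lim_at_right (f : R -> R) (a x l : R) :
  a < x -> (forall y, a < y < x -> f x <= f y) ->
  filterlim f (at_right a) (locally l) -> f x <= l.
Proof.
  intros Hax Hdecr Hlim.
  enough (Hle : Rbar_le (f x) l) by exact Hle.
  apply (filterlim_le (F := at_right a) (fun _ => f x) f); [| apply filterlim_const | exact Hlim].
  apply (filter_imp (fun y => a < y < x)); [exact Hdecr | now apply at_right_between].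
Qed.

Lemma is_RInt_gen_at_right_derive (f df : R -> R) (a b l : R) :
  a < b ->
  (forall x, a < x <= b -> is_derive f x (df x)) ->
  (forall x, a < x <= b -> continuous df x) ->
  filterlim f (at_right a) (locally l) ->
  is_RInt_gen df (at_right a) (at_point b) (f b - l).
Proof.
  intros Hab Hder Hcont Hlim.
  apply (filterlimi_lim_ext_loc (fun uv => f b - f (fst uv))).
  - apply (Filter_prod _ _ _ (fun u => a < u < b) (fun v => v = b));
      [now apply at_right_between | reflexivity |].
    intros u v Hu ->; simpl.
    apply (is_RInt_derive f df); rewrite Rmin_left, Rmax_right by lra;
      intros x Hx; [apply Hder | apply Hcont]; lra.
  - apply (filterlim_comp _ _ _ fst (fun u => f b - f u) _ (at_right a)); [apply filterlim_fst |].
    apply (filterlim_comp _ _ _ f (fun y => f b - y) _ (locally l)); [exact Hlim |].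
    apply (continuous_minus (fun _ => f b) (fun y => y));
      [apply continuous_const | apply continuous_id].
Qed.

Lemma tov_dP_neg (rho : R -> R) (r m p : R) :
  0 < rho p -> in_domain_D rho r m p -> tov_dP rho r m p < 0.
Proof.
  intros Hrho [Hr [Hp [Hmass Hm]]].
  unfold tov_dP, Rdiv in *.
  rewrite !Ropp_mult_distr_l_reverse.
  apply Ropp_lt_gt_0_contravar.
  apply Rmult_lt_0_compat; [apply Rmult_lt_0_compat; lra |].
  apply Rinv_0_lt_compat, Rmult_lt_0_compat; [apply pow_lt |]; lra.
Qed.

Lemma in_domain_D_mass_bounds (rho : R -> R) (r m p : R) :
  in_domain_D rho r m p -> - (4 * PI * r ^ 3 * rho p) < m < r / 2.
Proof.
  intros [Hr [_ [Hlow Hup]]].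
  split; [lra |].
  assert (Hmr : 2 * m / r * r = 2 * m) by (field; lra).
  nra.
Qed.

Lemma tov_pressure_decreasing (rho : R -> R) (Rad : R) (m P : R -> R) :
  (forall p, 0 < p -> 0 < rho p) ->
  (forall r, 0 < r < Rad -> is_derive P r (tov_dP rho r (m r) (P r))) ->
  (forall r, 0 < r < Rad -> in_domain_D rho r (m r) (P r)) ->
  forall x y, 0 < x < y -> y < Rad -> P y < P x.
Proof.
  intros Hrho_pos HP_der Hdom x y Hxy HyR.
  apply (is_derive_neg_decreasing P (fun r => tov_dP rho r (m r) (P r)) 0 Rad);
    simpl; try lra.
  - intros r Hr0 HrR; apply HP_der; lra.
  - intros r Hr0 HrR.
    assert (Hr : 0 < r < Rad) by lra.
    destruct (Hdom r Hr) as (_ & HPr & _).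
    apply tov_dP_neg; [now apply Hrho_pos | now apply Hdom].
Qed.

Lemma tov_mass_vanishes_at_centre (rho : R -> R) (Rad L : R) (m P : R -> R) :
  0 < Rad ->
  (forall r, 0 < r < Rad -> in_domain_D rho r (m r) (P r)) ->
  filterlim (fun r => rho (P r)) (at_right 0) (locally L) ->
  filterlim m (at_right 0) (locally 0).
Proof.
  intros HR Hdom Hrho_lim.
  assert (Hlow : filterlim (fun r => - (4 * PI) * r ^ 3 * rho (P r)) (at_right 0) (locally 0)).
  { assert (Hcube : filterlim (fun r => - (4 * PI) * r ^ 3) (at_right 0)
                      (locally (- (4 * PI) * 0 ^ 3))).
    { apply (filterlim_at_right_continuous (fun r => - (4 * PI) * r ^ 3)).
      apply (ex_derive_continuous (K := R_AbsRing) (V := R_NormedModule)); auto_derive; exact I. }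
    pose proof (filterlim_Rmult _ _ _ _ Hcube Hrho_lim) as Hlim.
    now replace (- (4 * PI) * 0 ^ 3 * L) with 0 in Hlim by ring. }
  assert (Hup : filterlim (fun r => r / 2) (at_right 0) (locally 0)).
  { replace 0 with (0 / 2) at 2 by field.
    apply (filterlim_at_right_continuous (fun r => r / 2)).
    apply (ex_derive_continuous (K := R_AbsRing) (V := R_NormedModule)); auto_derive; exact I. }
  apply (filterlim_le_le (F := at_right 0) (fun r => - (4 * PI) * r ^ 3 * rho (P r)) m
           (fun r => r / 2) 0); [| exact Hlow | exact Hup].
  apply (filter_imp (fun r => 0 < r < Rad)); [| now apply at_right_between].
  intros r Hr.
  pose proof (in_domain_D_mass_bounds _ _ _ _ (Hdom r Hr)); lra.
Qed.

Theorem mainTheorem1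
  (rho : R -> R)
  (Hrho_pos : forall p, 0 < p -> 0 < rho p)
  (Hrho_cont : forall p, 0 < p -> continuous rho p)
  (Rad M : R) (HR : 0 < Rad) (HM : 0 < M) (HRM : 0 < 1 - 2 * M / Rad)
  (m P : R -> R)
  (Hm_der : forall r, 0 < r < Rad -> is_derive m r (4 * PI * r ^ 2 * rho (P r)))
  (HP_der : forall r, 0 < r < Rad -> is_derive P r (tov_dP rho r (m r) (P r)))
  (Hm_C1 : forall r, 0 < r < Rad -> continuous (Derive m) r)
  (HP_C1 : forall r, 0 < r < Rad -> continuous (Derive P) r)
  (Hdom : forall r, 0 < r < Rad -> in_domain_D rho r (m r) (P r))
  (Hm_R : filterlim m (at_left Rad) (locally M))
  (HP_R : filterlim P (at_left Rad) (locally 0))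
  (HP_0 : exists PO : R, filterlim P (at_right 0) (locally PO)) :
  filterlim m (at_right 0) (locally 0) /\
  (forall r, 0 < r < Rad ->
     is_RInt_gen (fun s => 4 * PI * rho (P s) * s ^ 2) (at_right 0) (at_point r) (m r)).
Proof.
  destruct HP_0 as [PO HPO].
  assert (HPO_pos : 0 < PO).
  { apply (Rlt_le_trans _ (P (Rad / 2))); [apply Hdom; lra |].
    apply (decreasing_le_lim_at_right P 0); [lra | | exact HPO].
    intros y Hy; apply Rlt_le, (tov_pressure_decreasing rho Rad m P); auto; lra. }
  assert (Hrho_lim : filterlim (fun r => rho (P r)) (at_right 0) (locally (rho PO)))
    by exact (filterlim_comp _ _ _ P rho _ _ _ HPO (Hrho_cont PO HPO_pos)).
  assert (Hm0 := tov_mass_vanishes_at_centre rho Rad (rho PO) m P HR Hdom Hrho_lim).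
  split; [exact Hm0 |].
  intros r Hr.
  rewrite <- (Rminus_0_r (m r)).
  apply is_RInt_gen_at_right_derive; [lra | | | exact Hm0]; intros x Hx.
  - replace (4 * PI * rho (P x) * x ^ 2) with (4 * PI * x ^ 2 * rho (P x)) by ring.
    apply Hm_der; lra.
  - assert (HPx : continuous P x)
      by (apply (ex_derive_continuous (K := R_AbsRing) (V := R_NormedModule));
          eexists; apply HP_der; lra).
    assert (Hrho_Px : continuous rho (P x)) by (apply Hrho_cont, Hdom; lra).
    apply (continuous_mult (fun s => 4 * PI * rho (P s)) (fun s => s ^ 2)).
    + apply (continuous_mult (fun _ => 4 * PI) (fun s => rho (P s)));
        [apply continuous_const | now apply continuous_comp].
    + apply (ex_derive_continuous (K := R_AbsRing) (V := R_NormedModule)).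
      auto_derive; exact I.
Qed.
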